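(* Let $G$ be a finitely generated free abelian group and $N$ a $\mathbb{Z}[G]$-module admitting two injective presentations $0\to\mathbb{Z}[G]^a\xrightarrow{P}\mathbb{Z}[G]^b\xrightarrow{\pi}N\to0$ and $0\to\mathbb{Z}[G]^{a'}\xrightarrow{P'}\mathbb{Z}[G]^{b'}\xrightarrow{\pi'}N\to0$ with $b-a=b'-a'=d$. For $u_1,\dots,u_d\in N$ set $\mathcal{A}_P(u_1\wedge\cdots\wedge u_d)=\det[P\,|\,\bar u_1\cdots\bar u_d]\in\mathbb{Z}[G]$ with $\pi(\bar u_j)=u_j$, and similarly $\mathcal{A}_{P'}$. Then $\mathcal{A}_P$ does not depend on the lifts $\bar u_j$, and there is a single element $\epsilon g\in\pm G\subset\mathbb{Z}[G]$ with $\mathcal{A}_{P'}=\epsilon g\cdot\mathcal{A}_P$ on all of $\wedge^d_{\mathbb{Z}[G]}N$. In particular, for a connected sutured cobordism $(Y,\Gamma)$ with $H_2(\overline Y,\overline R^+)=0$, the $\mathbb{Z}[G]$-valued Alexander function on $\wedge^d_{\mathbb{Z}[G]}H_1(\overline Y,\overline R^+)$, $d=-\chi(Y,R^+)$, depends up to global multiplication by $\pm G$ only on the module $H_1(\overline Y,\overline R^+)$ and $d$.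
   Context: For a connected sutured cobordism $(Y,\Gamma)$ (compact oriented 3-manifold whose boundary contains the incoming/outgoing surfaces and regions $R^+,R^-$), $G=H_1(Y)/\mathrm{tors}(H_1(Y))$, $p\colon\overline Y\to Y$ is the maximal free abelian cover (deck group $G$), $\overline R^+=p^{-1}(R^+)$, and $H_1(\overline Y,\overline R^+)$ is a $\mathbb{Z}[G]$-module; when $H_2(\overline Y,\overline R^+)=0$ it admits an injective presentation matrix of deficiency $d$ (coming from a relative CW structure with $a$ 2-cells and $b$ 1-cells, $b-a=d$), and the Alexander function $\mathcal{A}^{\mathbb{Z}[G]}_{Y,\Gamma}$ is $\mathcal{A}_P$ for such $P$ (and $0$ if $H_2(\overline Y,\overline R^+)\neq0$). An injective presentation of deficiency $d$ is an exact sequence as in the claim with $b-a=d$. *)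

From HB Require Import structures.
From mathcomp Require Import all_boot all_order all_algebra.
Set Implicit Arguments. Unset Strict Implicit. Unset Printing Implicit Defensive.
Import Order.TTheory GRing.Theory Num.Theory.
Local Open Scope ring_scope.

(* The finitely generated free abelian group G is modelled as Z^n = 'rV[int]_n
   (written additively).  [is_group_ring e] says that the commutative ring R,
   together with e : G -> R, is the integral group ring Z[G]: e is a group
   homomorphism from (G,+) to the multiplicative monoid of R, and the family
   (e g)_{g in G} is a Z-basis of R (spanning + Z-linearly independent). *)
Definition is_group_ring (R : comNzRingType) (n : nat) (e : 'rV[int]_n -> R) : Prop :=
  [/\ e 0 = 1,
      (forall x y, e (x + y) = e x * e y),
      (forall r : R, exists s : seq ('rV[int]_n * int),
          r = \sum_(p <- s) (p.2)%:~R * e p.1) &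
      (forall (s : seq 'rV[int]_n) (c : 'rV[int]_n -> int), uniq s ->
          \sum_(g <- s) (c g)%:~R * e g = 0 -> forall g, g \in s -> c g = 0)].

(* An injective presentation 0 -> R^a --P--> R^b --pi--> N -> 0, with the
   row-vector convention (R^a -> R^b is v |-> v *m P), and b = a + d. *)
Definition injective_presentation (R : comNzRingType) (N : lmodType R)
    (a d : nat) (P : 'M[R]_(a, a + d)) (pi : 'rV[R]_(a + d) -> N) : Prop :=
  [/\ linear pi,
      (forall v w : 'rV[R]_a, v *m P = w *m P -> v = w),
      (forall x : N, exists v, pi v = x) &
      (forall v, pi v = 0 <-> exists w, v = w *m P)].

Definition alex_det (R : comNzRingType) (a d : nat) (P : 'M[R]_(a, a + d))
    (ubar : 'I_d -> 'rV[R]_(a + d)) : R :=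
  \det (col_mx P (\matrix_(j < d) ubar j)).

(* Two lifts of the same elements differ by combinations of the relations,
   i.e. of the rows of [P], which do not change the determinant.  Given two
   presentations, adjoin to each the generators of the other (a Tietze move);
   the two enlarged presentations have the same generators up to reordering and
   the same number of relations, so their relation matrices differ by an
   invertible matrix on the left and the determinants by a unit of Z[G].
   Units of Z[G] are trivial, since G = Z^n carries a translation-invariant
   total order (lexicographic): in a product, the product of the highest terms
   of the factors and that of their lowest terms cannot cancel, so for a
   product equal to 1 both lie in degree 0, which leaves a single term. *)
From HB Require Import structures.
From mathcomp Require Import all_boot all_order all_algebra.
Set Implicit Arguments. Unset Strict Implicit. Unset Printing Implicit Defensive.
Import Order.TTheory GRing.Theory Num.Theory.
Local Open Scope ring_scope.

Section Presentations.
Variable R : comNzRingType.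

Lemma mulmx_of_rows m k n (A : 'M[R]_(m, n)) (Q : 'M[R]_(k, n)) :
  (forall i, exists w : 'rV_k, row i A = w *m Q) -> exists X, A = X *m Q.
Proof.
move=> rowsA; have [w Hw] := fin_all_exists rowsA.
by exists (\matrix_i w i); apply/row_matrixP => i; rewrite row_mul rowK Hw.
Qed.

Lemma det_col_mx_addl k d (Q : 'M[R]_(k, k + d)) (X : 'M[R]_(d, k)) U :
  \det (col_mx Q (X *m Q + U)) = \det (col_mx Q U).
Proof.
have -> : col_mx Q (X *m Q + U) = block_mx 1%:M 0 X 1%:M *m col_mx Q U.
  by rewrite mul_block_col !mul1mx mul0mx addr0.
by rewrite det_mulmx det_lblock !det1 !mul1r.
Qed.

Lemma det_col_mx_mull k d (M : 'M[R]_k) (Q : 'M[R]_(k, k + d)) U :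
  \det (col_mx (M *m Q) U) = \det M * \det (col_mx Q U).
Proof.
have -> : col_mx (M *m Q) U = block_mx M 0 0 1%:M *m col_mx Q U.
  by rewrite mul_block_col !mul0mx !mul1mx addr0 add0r.
by rewrite det_mulmx det_lblock det1 mulr1.
Qed.

Section LinearLift.
Variables (N : lmodType R) (m n : nat) (pi : 'rV[R]_m -> N) (pi' : 'rV[R]_n -> N).
Hypotheses (pi_lin : linear pi) (pi'_lin : linear pi').
HB.instance Definition _ := GRing.isLinear.Build R _ _ _ pi pi_lin.
HB.instance Definition _ := GRing.isLinear.Build R _ _ _ pi' pi'_lin.

Lemma linear_surjective_lift :
  (forall x, exists v, pi v = x) -> exists F : 'M[R]_(n, m), forall y, pi (y *m F) = pi' y.
Proof.
move=> pi_surj.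
have [f Hf] := fin_all_exists (fun i : 'I_n => pi_surj (pi' (delta_mx 0 i))).
exists (\matrix_i f i) => y.
rewrite mulmx_sum_row [in RHS](row_sum_delta y) !linear_sum /=.
by apply: eq_bigr => i _; rewrite rowK !linearZ /= Hf.
Qed.
End LinearLift.

Section Presentation.
Variables (N : lmodType R) (k d : nat).
Variables (Q : 'M[R]_(k, k + d)) (pi : 'rV[R]_(k + d) -> N).
Hypothesis presQ : injective_presentation Q pi.

Let pi_lin : linear pi. Proof. by case: presQ. Qed.
HB.instance Definition _ := GRing.isLinear.Build R _ _ _ pi pi_lin.

Lemma presentation_row0 i : pi (row i Q) = 0.
Proof. by case: presQ => _ _ _ ker; apply/ker; exists (delta_mx 0 i); rewrite rowE. Qed.

Lemma presentation0 : pi 0 = 0.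
Proof. exact: raddf0. Qed.

Lemma presentation_rows_ker m (U : 'M[R]_(m, k + d)) :
  (forall j, pi (row j U) = 0) -> exists X, U = X *m Q.
Proof. by case: presQ => _ _ _ ker piU0; apply: mulmx_of_rows => j; apply/ker. Qed.

Lemma presentation_rows_sub m (U V : 'M[R]_(m, k + d)) :
  (forall j, pi (row j U) = pi (row j V)) -> exists X, U = X *m Q + V.
Proof.
move=> piUV; have [X HX] : exists X, U - V = X *m Q.
  by apply: presentation_rows_ker => j; rewrite rowE mulmxBr -!rowE raddfB /= piUV subrr.
by exists X; rewrite -HX subrK.
Qed.

Lemma det_presentation_lifts (U V : 'M[R]_(d, k + d)) :
  (forall j, pi (row j U) = pi (row j V)) -> \det (col_mx Q U) = \det (col_mx Q V).
Proof. by case/presentation_rows_sub => X ->; rewrite det_col_mx_addl. Qed.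

End Presentation.

Lemma det_presentation_same_map (N : lmodType R) k d
    (pi : 'rV[R]_(k + d) -> N) (Q Q' : 'M[R]_(k, k + d)) :
  injective_presentation Q pi ->
  injective_presentation Q' pi ->
  exists c c', c * c' = 1 /\ forall U, \det (col_mx Q' U) = c * \det (col_mx Q U).
Proof.
move=> presQ presQ'; have [_ injQ _ _] := presQ.
have [M QM] : exists M, Q' = M *m Q.
  exact: (presentation_rows_ker presQ (presentation_row0 presQ')).
have [M' QM'] : exists M', Q = M' *m Q'.
  exact: (presentation_rows_ker presQ' (presentation_row0 presQ)).
have M'M : M' *m M = 1%:M.
  apply/row_matrixP => i; apply: injQ.
  by rewrite -row_mul -mulmxA -QM -QM' row1 -rowE.
exists (\det M), (\det M'); split=> [|U]; last by rewrite QM det_col_mx_mull.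
by rewrite mulrC -det_mulmx M'M det1.
Qed.

Lemma injective_presentation_mulmx (N : lmodType R) k d (Q : 'M[R]_(k, k + d))
    (pi pi' : 'rV[R]_(k + d) -> N) (C C' : 'M[R]_(k + d)) :
  injective_presentation Q pi -> C *m C' = 1%:M -> C' *m C = 1%:M ->
  (forall v, pi' v = pi (v *m C)) -> injective_presentation (Q *m C') pi'.
Proof.
move=> [pi_lin injQ pi_surj ker] CC' C'C pi'E.
have mulC'K (v : 'rV_(k + d)) : v *m C' *m C = v by rewrite -mulmxA C'C mulmx1.
split.
- by move=> x u v; rewrite !pi'E mulmxDl -scalemxAl pi_lin.
- by move=> v w /(congr1 (mulmx^~ C)); rewrite !mulmxA !mulC'K => /injQ.
- by move=> x; have [v <-] := pi_surj x; exists (v *m C'); rewrite pi'E mulC'K.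
move=> v; rewrite pi'E; split=> [/ker [w vCE]|[w ->]].
  by exists w; rewrite mulmxA -vCE -mulmxA CC' mulmx1.
by apply/ker; exists w; rewrite mulmxA mulC'K.
Qed.

(* The numbers of relations are equal but, in the application, not convertible:
   [(a' + d) + a] and [(a + d) + a']. *)
Lemma det_presentations_change_generators (N : lmodType R) k k' d (ek : k = k')
    (Q : 'M[R]_(k, k + d)) (pi : 'rV[R]_(k + d) -> N)
    (Q' : 'M[R]_(k', k' + d)) (pi' : 'rV[R]_(k' + d) -> N)
    (C : 'M[R]_(k + d, k' + d)) (C' : 'M[R]_(k' + d, k + d)) :
  injective_presentation Q pi -> injective_presentation Q' pi' ->
  C *m C' = 1%:M -> C' *m C = 1%:M -> (forall v, pi' (v *m C) = pi v) ->
  exists c c', c * c' = 1 /\ forall U U', (forall j, pi (row j U) = pi' (row j U')) ->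
    \det (col_mx Q' U') = c * \det (col_mx Q U).
Proof.
case: k' / ek in Q' pi' C C' * => presQ presQ' CC' C'C pi'C.
have presQ'C' : injective_presentation (Q' *m C') pi.
  by apply: injective_presentation_mulmx presQ' CC' C'C _ => v; rewrite pi'C.
have [c [c' [cc' detQ'C']]] := det_presentation_same_map presQ presQ'C'.
exists (c * \det C), (c' * \det C'); split.
  by rewrite mulrACA cc' -det_mulmx CC' det1 mulr1.
move=> U U' piUU'.
have -> : col_mx Q' U' = col_mx (Q' *m C') (U' *m C') *m C.
  by rewrite -mul_col_mx -mulmxA C'C mulmx1.
rewrite det_mulmx (det_presentation_lifts presQ'C' (V := U)) => [|j].
  by rewrite detQ'C' mulrAC.
by rewrite -pi'C row_mul -mulmxA C'C mulmx1 piUU'.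
Qed.

Lemma lsubmx_col m1 m2 n1 n2 (A : 'M[R]_(m1, n1 + n2)) (B : 'M[R]_(m2, n1 + n2)) :
  lsubmx (col_mx A B) = col_mx (lsubmx A) (lsubmx B).
Proof. by rewrite -[col_mx A B]mulmx1 -mulmx_lsub mul_col_mx !mulmx_lsub !mulmx1. Qed.

Lemma rsubmx_col m1 m2 n1 n2 (A : 'M[R]_(m1, n1 + n2)) (B : 'M[R]_(m2, n1 + n2)) :
  rsubmx (col_mx A B) = col_mx (rsubmx A) (rsubmx B).
Proof. by rewrite -[col_mx A B]mulmx1 -mulmx_rsub mul_col_mx !mulmx_rsub !mulmx1. Qed.

Lemma det_castmx m m' (e : m = m') (A : 'M[R]_m) : \det (castmx (e, e) A) = \det A.
Proof. by case: m' / e in A *; rewrite castmx_id. Qed.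

Section JoinMx.
Variables p a d : nat.

(* [join_mx Y X] is [row_mx Y X] with its columns regrouped as [(p + a) + d], the
   shape of a presentation matrix with [p + a] relations and deficiency [d]. *)
Definition join_mx r (Y : 'M[R]_(r, p)) (X : 'M[R]_(r, a + d)) : 'M[R]_(r, (p + a) + d) :=
  row_mx (row_mx Y (lsubmx X)) (rsubmx X).
Definition join_l r (V : 'M[R]_(r, (p + a) + d)) : 'M[R]_(r, p) := lsubmx (lsubmx V).
Definition join_r r (V : 'M[R]_(r, (p + a) + d)) : 'M[R]_(r, a + d) :=
  row_mx (rsubmx (lsubmx V)) (rsubmx V).

Lemma mul_join_mx r s (A : 'M[R]_(s, r)) Y X : A *m join_mx Y X = join_mx (A *m Y) (A *m X).
Proof. by rewrite /join_mx !mul_mx_row mulmx_lsub mulmx_rsub. Qed.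

Lemma join_mxKl r (Y : 'M[R]_(r, p)) X : join_l (join_mx Y X) = Y.
Proof. by rewrite /join_l /join_mx !row_mxKl. Qed.

Lemma join_mxKr r (Y : 'M[R]_(r, p)) X : join_r (join_mx Y X) = X.
Proof. by rewrite /join_r /join_mx row_mxKl !row_mxKr hsubmxK. Qed.

Lemma join_mxK r (V : 'M[R]_(r, (p + a) + d)) : join_mx (join_l V) (join_r V) = V.
Proof. by rewrite /join_l /join_r /join_mx row_mxKl row_mxKr !hsubmxK. Qed.

Lemma join_l_mul r s (A : 'M[R]_(s, r)) V : join_l (A *m V) = A *m join_l V.
Proof. by rewrite /join_l !mulmx_lsub. Qed.

Lemma join_r_mul r s (A : 'M[R]_(s, r)) V : join_r (A *m V) = A *m join_r V.
Proof. by rewrite /join_r mul_mx_row !mulmx_rsub mulmx_lsub. Qed.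

Lemma det_join_mx (B : 'M[R]_(p, a + d)) (P : 'M[R]_(a, a + d)) (U : 'M[R]_(d, a + d)) :
  \det (col_mx (join_mx (col_mx 1%:M 0) (col_mx B P)) (join_mx 0 U)) = \det (col_mx P U).
Proof.
have := block_mxA (A11 := 1%:M : 'M[R]_p) (A12 := lsubmx B) (A13 := rsubmx B)
  (A21 := 0) (A22 := lsubmx P) (A23 := rsubmx P) (A31 := 0) (A32 := lsubmx U) (A33 := rsubmx U).
rewrite /= hsubmxK col_mx0 [block_mx (lsubmx P) _ _ _]block_mxEv !hsubmxK => /castmx_sym E.
rewrite /join_mx !lsubmx_col !rsubmx_col -[col_mx (row_mx _ _) _]block_mxEv -block_mxEh.
by rewrite E det_castmx det_ublock det1 mul1r.
Qed.
End JoinMx.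

Section JoinPresentation.
Variables (N : lmodType R) (p a d : nat).
Variables (P : 'M[R]_(a, a + d)) (pi : 'rV[R]_(a + d) -> N).
Variables (pi2 : 'rV[R]_p -> N) (F : 'M[R]_(p, a + d)).
Hypotheses (presP : injective_presentation P pi) (pi2_lin : linear pi2).
Hypothesis piF : forall y, pi (y *m F) = pi2 y.

Let pi_lin : linear pi. Proof. by case: presP. Qed.
HB.instance Definition _ := GRing.isLinear.Build R _ _ _ pi pi_lin.
HB.instance Definition _ := GRing.isLinear.Build R _ _ _ pi2 pi2_lin.

(* Adjoining the generators of [pi2] to those of [pi], each with the relation
   expressing it through its lift [F]: a Tietze move. *)
Lemma injective_presentation_join :
  injective_presentation (join_mx (col_mx 1%:M 0) (col_mx (- F) P))
    (fun v => pi2 (join_l v) + pi (join_r v)).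
Proof.
have [_ injP pi_surj ker] := presP.
have QE (w : 'rV_(p + a)) : w *m join_mx (col_mx 1%:M 0) (col_mx (- F) P) =
    join_mx (lsubmx w) (rsubmx w *m P - lsubmx w *m F).
  by rewrite mul_join_mx -{1 2}[w]hsubmxK !mul_row_col mulmx1 mulmx0 addr0 mulmxN addrC.
split.
- move=> c u v.
  have -> : join_l (c *: u + v) = c *: join_l u + join_l v by rewrite /join_l !linearP.
  have -> : join_r (c *: u + v) = c *: join_r u + join_r v.
    by rewrite /join_r !linearP /= scale_row_mx add_row_mx.
  by rewrite !linearP /= scalerDr addrACA.
- move=> v w; rewrite !QE => vw.
  have lvw : lsubmx v = lsubmx w by have := congr1 (@join_l p a d 1) vw; rewrite !join_mxKl.
  have := congr1 (@join_r p a d 1) vw; rewrite !join_mxKr lvw => /addIr /injP rvw.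
  by rewrite -[v]hsubmxK -[w]hsubmxK lvw rvw.
- by move=> x; have [v <-] := pi_surj x; exists (join_mx 0 v); rewrite join_mxKl join_mxKr
    raddf0 add0r.
move=> v; split=> [Phi0|[w ->]].
  have /ker [w Hw] : pi (join_r v + join_l v *m F) = 0 by rewrite raddfD /= piF addrC.
  exists (row_mx (join_l v) w); rewrite QE row_mxKl row_mxKr -Hw.
  by rewrite addrK join_mxK.
rewrite QE join_mxKl join_mxKr raddfB /= piF.
have -> : pi (rsubmx w *m P) = 0 by apply/ker; exists (rsubmx w).
by rewrite sub0r subrr.
Qed.
End JoinPresentation.

Definition join_swap a a' d : 'M[R]_(((a' + d) + a) + d, ((a + d) + a') + d) :=
  join_mx (join_r 1%:M) (join_l 1%:M).

Lemma mul_join_swap a a' d r (V : 'M[R]_(r, ((a' + d) + a) + d)) :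
  V *m join_swap a a' d = join_mx (join_r V) (join_l V).
Proof. by rewrite mul_join_mx -join_r_mul -join_l_mul !mulmx1. Qed.

Lemma join_swapK a a' d : join_swap a a' d *m join_swap a' a d = 1%:M.
Proof. by rewrite mul_join_swap join_mxKl join_mxKr join_mxK. Qed.

Lemma det_presentations_associated (N : lmodType R) a a' d
    (P : 'M[R]_(a, a + d)) (pi : 'rV[R]_(a + d) -> N)
    (P' : 'M[R]_(a', a' + d)) (pi' : 'rV[R]_(a' + d) -> N) :
  injective_presentation P pi -> injective_presentation P' pi' ->
  exists c c', c * c' = 1 /\ forall U U', (forall j, pi (row j U) = pi' (row j U')) ->
    \det (col_mx P' U') = c * \det (col_mx P U).
Proof.
move=> presP presP'.
have [[pi_lin _ pi_surj _] [pi'_lin _ pi'_surj _]] := (presP, presP').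
have [F' piF'] := linear_surjective_lift pi_lin pi'_lin pi_surj.
have [F pi'F] := linear_surjective_lift pi'_lin pi_lin pi'_surj.
have ek : ((a' + d) + a = (a + d) + a')%N by rewrite addnAC [RHS]addnAC (addnC a).
have swapE (v : 'rV_((a' + d + a) + d)) :
    pi (join_l (v *m join_swap a a' d)) + pi' (join_r (v *m join_swap a a' d)) =
    pi' (join_l v) + pi (join_r v).
  by rewrite mul_join_swap join_mxKl join_mxKr addrC.
have [c [c' [cc' detQ]]] := det_presentations_change_generators ek
  (injective_presentation_join presP pi'_lin piF')
  (injective_presentation_join presP' pi_lin pi'F)
  (join_swapK a a' d) (join_swapK a' a d) swapE.
exists c, c'; split=> // U U' piUU'.
rewrite -(det_join_mx (- F) P' U') -(det_join_mx (- F') P U); apply: detQ => j.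
rewrite !rowE !mul_join_mx !mulmx0 !join_mxKl !join_mxKr -!rowE.
by rewrite (presentation0 presP) (presentation0 presP') !add0r.
Qed.
End Presentations.

Definition translation_invariant_order (G : zmodType) (lt : G -> G -> Prop) : Prop :=
  [/\ forall x y z, lt x y -> lt y z -> lt x z, forall x, ~ lt x x,
      forall x y, x <> y -> lt x y \/ lt y x &
      forall x y z, lt x y -> lt (x + z) (y + z)].

Lemma translation_invariant_order_rev (G : zmodType) (lt : G -> G -> Prop) :
  translation_invariant_order lt -> translation_invariant_order (fun x y => lt y x).
Proof.
case=> lt_trans lt_irr lt_total lt_add; split=> // [x y z xy yz|x y /lt_total[]|x y z].
- exact: lt_trans yz xy.
- by right.
- by left.
- exact: lt_add.
Qed.

Section InvariantOrder.
Variables (G : zmodType) (lt : G -> G -> Prop).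
Hypothesis ltO : translation_invariant_order lt.

Lemma seq_has_max (S : seq G) : S != [::] ->
  exists2 m, m \in S & {in S, forall g, g = m \/ lt g m}.
Proof.
have [lt_trans _ lt_total _] := ltO.
elim: S => // x [|y S] IH _.
  by exists x => [|g]; rewrite ?mem_seq1 // => /eqP ->; left.
have [m mS Hm] := IH isT.
have [->|xm] := eqVneq x m.
  by exists m => [|g]; rewrite inE ?mS ?orbT // => /orP[/eqP->|/Hm]; [left|].
case: (lt_total _ _ (elimN eqP xm)) => [xltm|mltx].
  by exists m => [|g]; rewrite inE ?mS ?orbT // => /orP[/eqP->|/Hm]; [right|].
exists x => [|g]; first by rewrite inE eqxx.
rewrite inE => /orP[/eqP->|/Hm [->|gltm]]; [left|right|right] => //.
exact: lt_trans gltm mltx.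
Qed.

Lemma add_eq_max gm hm g h :
  g = gm \/ lt g gm -> h = hm \/ lt h hm -> g + h = gm + hm -> g = gm /\ h = hm.
Proof.
have [lt_trans lt_irr _ lt_add] := ltO.
move=> [->|ltg] [->|lth] ghE //; first by move/addrI: ghE.
  by move/addIr: ghE.
have lt2 : lt (gm + h) (gm + hm) by rewrite ![gm + _]addrC; exact: lt_add.
by have := lt_trans _ _ _ (lt_add _ _ h ltg) lt2; rewrite ghE => /lt_irr.
Qed.
End InvariantOrder.

Lemma sum_seq_pick (T : eqType) (V : zmodType) (r : seq T) (i : T) (x : V) :
  uniq r -> i \in r -> \sum_(j <- r) (if i == j then x else 0) = x.
Proof.
move=> ur ir; rewrite (bigD1_seq i) //= eqxx big1 ?addr0 // => j.
by rewrite eq_sym => /negbTE ->.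
Qed.

Lemma int_unit_sign (z z' : int) : z * z' = 1 -> z = (-1) ^+ (z < 0)%R.
Proof.
move=> zz'; have /eqP : (absz z * absz z')%N = 1%N by rewrite -abszM zz'.
by rewrite muln_eq1 => /andP[/eqP z1 _]; rewrite {1}[z]intEsign z1 mulr1.
Qed.

Section GroupRing.
Variables (G : zmodType) (R : comNzRingType) (e : G -> R).
Hypotheses (e0 : e 0 = 1) (eD : forall x y, e (x + y) = e x * e y).
Hypothesis e_span : forall r : R, exists s : seq (G * int),
  r = \sum_(p <- s) (p.2)%:~R * e p.1.
Hypothesis e_free : forall (s : seq G) (c : G -> int), uniq s ->
  \sum_(g <- s) (c g)%:~R * e g = 0 -> forall g, g \in s -> c g = 0.

Lemma sum_group_by (s : seq (G * int)) :
  \sum_(p <- s) p.2%:~R * e p.1 =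
  \sum_(g <- undup (map fst s)) (\sum_(p <- s | p.1 == g) p.2)%:~R * e g.
Proof.
transitivity (\sum_(g <- undup (map fst s)) \sum_(p <- s)
    if p.1 == g then p.2%:~R * e p.1 else 0).
  rewrite exchange_big /=; apply: eq_big_seq => p ps.
  by rewrite sum_seq_pick ?undup_uniq // mem_undup map_f.
apply: eq_bigr => g _; rewrite [in RHS]big_mkcond rmorph_sum mulr_suml /=.
by apply: eq_bigr => p _; case: eqP => [->|_]; rewrite ?mul0r.
Qed.

Definition is_expansion (S : seq G) (f : G -> int) (r : R) :=
  [/\ uniq S, {in S, forall g, f g != 0} & r = \sum_(g <- S) (f g)%:~R * e g].

Lemma exists_expansion r : exists S f, is_expansion S f r.
Proof.
have [s ->] := e_span r.
pose f g := \sum_(p <- s | p.1 == g) p.2.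
exists [seq g <- undup (map fst s) | f g != 0], f; split.
- by rewrite filter_uniq // undup_uniq.
- by move=> g; rewrite mem_filter => /andP[].
rewrite sum_group_by big_filter [in RHS]big_mkcond; apply: eq_bigr => g _.
by rewrite -/(f g); case: eqP => [->|]; rewrite ?mul0r.
Qed.

Lemma group_by_coef_eq0 (s : seq (G * int)) : \sum_(p <- s) p.2%:~R * e p.1 = 0 ->
  forall g, \sum_(p <- s | p.1 == g) p.2 = 0.
Proof.
rewrite sum_group_by => s0 g.
have [gs|gNs] := boolP (g \in map fst s).
  by apply: e_free (undup_uniq _) s0 _ _; rewrite mem_undup.
rewrite big1_seq // => p /andP[/eqP pg ps].
by case/negP: gNs; rewrite -pg map_f.
Qed.

Lemma expansion_mul_coef S f S' f' c c' gm hm :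
  is_expansion S f c -> is_expansion S' f' c' -> c * c' = 1 ->
  gm \in S -> hm \in S' ->
  (forall g h, g \in S -> h \in S' -> g + h = gm + hm -> g = gm /\ h = hm) ->
  f gm * f' hm = (gm + hm == 0)%:Z.
Proof.
move=> [uS _ cE] [uS' _ c'E] cc' gmS hmS gh_uniq.
pose s := [seq (g + h, f g * f' h) | g <- S, h <- S'] ++ [:: (0, -1)].
have cc'E : c * c' = \sum_(g <- S) \sum_(h <- S') (f g * f' h)%:~R * e (g + h).
  rewrite cE c'E big_distrl; apply: eq_bigr => g _; rewrite big_distrr.
  by apply: eq_bigr => h _; rewrite intrM eD mulrACA.
have s0 : \sum_(p <- s) p.2%:~R * e p.1 = 0.
  by rewrite big_cat big_allpairs_dep big_seq1 /= e0 mulr1 rmorphN1 -cc'E cc' subrr.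
have := group_by_coef_eq0 s0 (gm + hm).
rewrite big_mkcond big_cat big_allpairs_dep big_seq1 /=.
rewrite (bigD1_seq gm) //= (bigD1_seq hm) //= eqxx.
rewrite big1 => [|h hhm]; last by case: eqP => // /addrI hE; rewrite hE eqxx in hhm.
rewrite big1_seq => [|g /andP[ggm gS]]; last first.
  apply: big1_seq => h /andP[_ hS]; case: eqP => // /(gh_uniq _ _ gS hS) [gE _].
  by rewrite gE eqxx in ggm.
by rewrite !addr0 [0 == _]eq_sym; case: eqP => _ /eqP; rewrite ?addr0 ?subr_eq0 => /eqP.
Qed.

Lemma expansion_mul_eq1_max lt S f S' f' c c' : translation_invariant_order lt ->
  is_expansion S f c -> is_expansion S' f' c' -> c * c' = 1 ->
  exists g h, [/\ g \in S, h \in S', {in S, forall x, x = g \/ lt x g},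
    {in S', forall y, y = h \/ lt y h} & g + h = 0 /\ f g * f' h = 1].
Proof.
move=> ltO expc expc' cc'.
have expansion_nil S1 f1 r : is_expansion S1 f1 r -> r != 0 -> S1 != [::].
  by case=> _ _ -> nz; apply: contraNneq nz => ->; rewrite big_nil.
have [c0 c'0] : c != 0 /\ c' != 0.
  by split; apply: contra_eq_neq cc' => ->; rewrite ?mul0r ?mulr0 eq_sym oner_eq0.
have [g gS gmax] := seq_has_max ltO (expansion_nil _ _ _ expc c0).
have [h hS hmax] := seq_has_max ltO (expansion_nil _ _ _ expc' c'0).
have fgh := expansion_mul_coef expc expc' cc' gS hS
  (fun x y xS yS => add_eq_max ltO (gmax x xS) (hmax y yS)).
have gh0 : g + h = 0.
  have [_ fnz _] := expc; have [_ f'nz _] := expc'.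
  by apply/eqP; have := mulf_neq0 (fnz g gS) (f'nz h hS); rewrite fgh; case: (g + h == 0).
by exists g, h; split=> //; split=> //; rewrite fgh gh0 eqxx.
Qed.

Lemma group_ring_unit (lt : G -> G -> Prop) c c' :
  translation_invariant_order lt -> c * c' = 1 ->
  exists (eps : bool) g, c = (-1) ^+ eps * e g.
Proof.
move=> ltO cc'; have [lt_trans lt_irr _ _] := ltO.
have [S [f expc]] := exists_expansion c; have [S' [f' expc']] := exists_expansion c'.
have [g1 [h1 [g1S h1S g1max h1max [gh1 _]]]] := expansion_mul_eq1_max ltO expc expc' cc'.
have [g0 [h0 [g0S h0S g0min h0min [gh0 fgh0]]]] :=
  expansion_mul_eq1_max (translation_invariant_order_rev ltO) expc expc' cc'.
have [g01 _] := add_eq_max ltO (g1max _ g0S) (h1max _ h0S) (etrans gh0 (esym gh1)).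
have S_g0 : {in S, forall g, g = g0}.
  move=> g gS; case: (g0min g gS) => // g0g; case: (g1max g gS) => [->//|gg1].
  by case: (lt_irr g0); apply: lt_trans g0g _; rewrite g01.
have cE : c = (f g0)%:~R * e g0.
  have [uS _ ->] := expc; rewrite (bigD1_seq g0) //= big1_seq ?addr0 // => g /andP[gg0 gS].
  by rewrite (S_g0 g gS) eqxx in gg0.
by exists (f g0 < 0), g0; rewrite cE {1}(int_unit_sign fgh0) intr_sign.
Qed.
End GroupRing.

Definition lexlt n (x y : 'rV[int]_n) : Prop :=
  exists i : 'I_n, (forall j : 'I_n, (j < i)%N -> x 0 j = y 0 j) /\ x 0 i < y 0 i.

Lemma lexlt_total n (x y : 'rV[int]_n) : x <> y -> lexlt x y \/ lexlt y x.
Proof.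
move=> xy; have [j0 xyj0] : exists j, x 0 j != y 0 j.
  apply/existsP; apply: contraNT (introN eqP xy) => /existsPn xy_eq.
  by apply/eqP/rowP => j; apply/eqP; rewrite (negPn (xy_eq j)).
case: (@arg_minnP _ j0 (fun j => x 0 j != y 0 j) (@nat_of_ord n) xyj0) => i xyi i_min.
have eq_before (j : 'I_n) : (j < i)%N -> x 0 j = y 0 j.
  by move=> ji; apply/eqP; apply: contraTT ji => /i_min; rewrite -leqNgt.
by case/orP: (lt_total xyi) => lt_xy; [left|right]; exists i; split=> // j /eq_before.
Qed.

Lemma lexlt_order n : translation_invariant_order (@lexlt n).
Proof.
split.
- move=> x y z [i [xy_eq xy_lt]] [k [yz_eq yz_lt]].
  case: (ltngtP i k) => [ik|ki|/val_inj ik].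
  + exists i; split=> [j ji|]; last by rewrite -(yz_eq i ik).
    by rewrite xy_eq // yz_eq // (ltn_trans ji ik).
  + exists k; split=> [j jk|]; last by rewrite (xy_eq k ki).
    by rewrite xy_eq ?yz_eq // (ltn_trans jk ki).
  + subst k; exists i; split=> [j ji|]; first by rewrite xy_eq ?yz_eq.
    exact: lt_trans xy_lt yz_lt.
- by move=> x [i [_]]; rewrite ltxx.
- exact: lexlt_total.
- move=> x y z [i [xy_eq xy_lt]]; exists i.
  by split=> [j ji|]; rewrite !mxE ?ltrD2r // xy_eq.
Qed.

Lemma is_group_ring_unit n (R : comNzRingType) (e : 'rV[int]_n -> R) (c c' : R) :
  is_group_ring e -> c * c' = 1 -> exists (eps : bool) (g : 'rV[int]_n), c = (-1) ^+ eps * e g.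
Proof. by case=> e0 eD e_span e_free; apply: group_ring_unit (lexlt_order n). Qed.

Theorem proposition10p3 (n : nat) (R : comNzRingType) (e : 'rV[int]_n -> R)
  (N : lmodType R) (a a' d : nat)
  (P : 'M[R]_(a, a + d)) (pi : 'rV[R]_(a + d) -> N)
  (P' : 'M[R]_(a', a' + d)) (pi' : 'rV[R]_(a' + d) -> N) :
  is_group_ring e ->
  injective_presentation P pi ->
  injective_presentation P' pi' ->
  (forall (u : 'I_d -> N) (ubar vbar : 'I_d -> 'rV[R]_(a + d)),
      (forall j, pi (ubar j) = u j) -> (forall j, pi (vbar j) = u j) ->
      alex_det P ubar = alex_det P vbar) /\
  (exists (eps : bool) (g : 'rV[int]_n),
      forall (u : 'I_d -> N) (ubar : 'I_d -> 'rV[R]_(a + d))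
             (ubar' : 'I_d -> 'rV[R]_(a' + d)),
        (forall j, pi (ubar j) = u j) -> (forall j, pi' (ubar' j) = u j) ->
        alex_det P' ubar' = (-1) ^+ eps * e g * alex_det P ubar).
Proof.
rewrite /alex_det => group_ring presP presP'; split=> [u ubar vbar piu piv|].
  by apply: (det_presentation_lifts presP) => j; rewrite !rowK piu piv.
have [c [c' [cc' detP']]] := det_presentations_associated presP presP'.
have [eps [g cE]] := is_group_ring_unit group_ring cc'.
exists eps, g => u ubar ubar' piu piu'; rewrite -cE; apply: detP' => j.
by rewrite !rowK piu piu'.
Qed.
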